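(* Let $\beta$ be a nonstandard hypernatural number and $T$ a $\beta$-tree. Then for every $s\in T/st(T)$ there exists $X\in[\mathbb{N}]^\infty$ with $s\sqsubseteq X$ such that $[s,X]\subseteq[T]$.
   Context: Setting (Alpha-Theory of Benci–Di Nasso): ZFC together with a new symbol $\alpha$ satisfying: ($\alpha$1) every sequence $\varphi=\langle\varphi_i:i\in\mathbb{N}\rangle$ has a unique ideal value $\varphi[\alpha]$; ($\alpha$2) if $\varphi[\alpha]=\psi[\alpha]$ and $f\circ\varphi$, $f\circ\psi$ make sense then $(f\circ\varphi)[\alpha]=(f\circ\psi)[\alpha]$; ($\alpha$3) constant real sequences $r$ have ideal value $r$, and $\langle i\rangle$ has ideal value $\alpha\notin\mathbb{N}$; ($\alpha$4) if $\vartheta_i=\{\varphi_i,\psi_i\}$ then $\vartheta[\alpha]=\{\varphi[\alpha],\psi[\alpha]\}$; ($\alpha$5) the constant sequence $\emptyset$ has ideal value $\emptyset$, and for nonempty $\psi_i$, $\psi[\alpha]=\{\vartheta[\alpha]:\vartheta_i\in\psi_i\ \forall i\}$. ${}^*A$ is the ideal value of the constant sequence $A$; elements of ${}^*\mathbb{N}\setminus\mathbb{N}$ are nonstandard hypernatural numbers. For finite $s$ and $X\subseteq\mathbb{N}$, $s\sqsubseteq X$ means $s=\{j\in X:j\le i\}$ for some $i$; $[s,X]=\{Y\in[\mathbb{N}]^\infty:s\sqsubseteq Y\subseteq X\}$. A tree on $\mathbb{N}$ is a nonempty $T\subseteq[\mathbb{N}]^{<\infty}$ closed under $\sqsubseteq$-initial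 segments; $[T]=\{X\in[\mathbb{N}]^\infty:$ every finite $s\sqsubseteq X$ is in $T\}$; stem $st(T)$ = $\sqsubseteq$-maximal $s\in T$ comparable with all elements of $T$; $T/s=\{t\in T:s\sqsubseteq t\}$. A $\beta$-tree is a tree $T$ with a stem, $T/st(T)\neq\emptyset$, and $s\cup\{\beta\}\in{}^*T$ for all $s\in T/st(T)$. *)

From mathcomp Require Import all_boot.
From mathcomp Require Export boolp classical_sets cardinality.
Set Implicit Arguments. Unset Strict Implicit. Unset Printing Implicit Defensive.
Local Open Scope classical_set_scope.

(* alpha is modelled by an ultrafilter U on nat (U_alpha = {A | alpha in *A});
   ideal values of sequences are their classes modulo U. *)
Definition is_ultrafilter (U : set (set nat)) : Prop :=
  U setT /\ ~ U set0 /\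
  (forall A B, U A -> A `<=` B -> U B) /\
  (forall A B, U A -> U B -> U (A `&` B)) /\
  (forall A, U A \/ U (~` A)).

(* alpha is not in N: the ultrafilter is nonprincipal *)
Definition nonprincipal (U : set (set nat)) : Prop := forall n, ~ U [set n].

(* a hypernatural beta = f[alpha], f : nat -> nat; beta is nonstandard iff
   it differs from every standard n, i.e. {i | f i = n} is not in U *)
Definition nonstandard (U : set (set nat)) (f : nat -> nat) : Prop :=
  forall n : nat, ~ U [set i | f i = n].

Definition initseg (s X : set nat) : Prop :=
  exists i : nat, s = [set j | X j /\ (j <= i)%N].

Definition ellentuck (s X : set nat) : set (set nat) :=
  [set Y | infinite_set Y /\ initseg s Y /\ Y `<=` X].

Definition is_tree (T : set (set nat)) : Prop :=
  (exists t, T t) /\ (forall t, T t -> finite_set t) /\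
  (forall t s, T t -> initseg s t -> T s).

Definition body (T : set (set nat)) : set (set nat) :=
  [set X | infinite_set X /\ (forall s, finite_set s -> initseg s X -> T s)].

Definition comparable_all (T : set (set nat)) (s : set nat) : Prop :=
  forall t, T t -> initseg s t \/ initseg t s.

Definition is_stem (T : set (set nat)) (s : set nat) : Prop :=
  T s /\ comparable_all T s /\
  (forall s', T s' -> comparable_all T s' -> initseg s s' -> s' = s).

Definition tree_above (T : set (set nat)) (s : set nat) : set (set nat) :=
  [set t | T t /\ initseg s t].

(* s ∪ {beta} ∈ *T, with beta = f[alpha]:  {i | s ∪ {f i} ∈ T} ∈ U *)
Definition star_T_contains_ext (U : set (set nat)) (f : nat -> nat)
    (T : set (set nat)) (s : set nat) : Prop :=
  U [set i | T (s `|` [set f i])].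

Definition beta_tree (U : set (set nat)) (f : nat -> nat) (T : set (set nat)) : Prop :=
  is_tree T /\
  exists s0, is_stem T s0 /\ (exists t, tree_above T s0 t) /\
    (forall s, tree_above T s0 s -> star_T_contains_ext U f T s).

From mathcomp Require Import all_boot boolp classical_sets cardinality.
Set Implicit Arguments. Unset Strict Implicit. Unset Printing Implicit Defensive.
Local Open Scope classical_set_scope.

(* Let s0 be the stem and s a node above it. By the beta-tree property, for each
   node t of T/s0 the set {i | t ∪ {f i} ∈ T} belongs to U; an ultrafilter is
   closed under finite intersections and, beta being nonstandard, contains the
   sets {i | m < f i}. Hence, given finitely many chosen points a_0 < ... < a_n
   above s such that s ∪ t ∈ T for all t ⊆ {a_0, ..., a_n}, one finds a larger
   a_(n+1) preserving this. For X = s ∪ {a_n | n ∈ N}, every finite initial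
   segment of a Y ∈ [s, X] is either an initial segment of s or of the form
   s ∪ t with t such a finite set. *)

Lemma finite_nat_bounded (A : set nat) :
  finite_set A -> exists B, forall x, A x -> (x <= B)%N.
Proof.
move=> /finite_seqP[L ->]; exists (\max_(x <- L) x) => x /= xL.
exact: (leq_bigmax_seq _ xL).
Qed.

Lemma unbounded_infinite (A : set nat) :
  (forall m, exists2 x, A x & (m < x)%N) -> infinite_set A.
Proof.
move=> Aunb /finite_nat_bounded[B AB]; have [x Ax Bx] := Aunb B.
by have := AB x Ax; rewrite leqNgt Bx.
Qed.

Lemma set_cons (T : eqType) (x : T) (L : seq T) : [set` x :: L] = x |` [set` L].
Proof. by apply/seteqP; split=> y /=; rewrite inE => /predU1P. Qed.

Lemma forall_subset_setU1 (T : Type) (x : T) (A : set T) (Q : set T -> Prop) :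
  (forall t, t `<=` A -> Q t) -> (forall t, t `<=` A -> Q (x |` t)) ->
  forall t, t `<=` x |` A -> Q t.
Proof.
move=> QA QxA t tA; have tDA : t `\ x `<=` A by move=> y [/tA[]].
case: (pselect (t x)) => tx; first by rewrite -(setD1K tx); exact: QxA.
by apply: QA => y ty; case: (tA y ty) => // yx; rewrite yx in ty.
Qed.

Section Ultrafilter.
Variable U : set (set nat).
Hypothesis U_ultra : is_ultrafilter U.

Lemma ultrafilter_nonempty A : U A -> exists x, A x.
Proof.
have [_ [U_0 _]] := U_ultra => UA; apply: contrapT => A0; apply: U_0.
by rewrite -(_ : A = set0) //; apply/seteqP; split=> // x Ax; apply: A0; exists x.
Qed.

Lemma ultrafilter_subsets (A : set nat) (P : set nat -> set nat) :
  finite_set A -> (forall t, t `<=` A -> U (P t)) ->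
  U [set i | forall t, t `<=` A -> P t i].
Proof.
have [_ [_ [U_super [U_setI _]]]] := U_ultra.
move=> /finite_seqP[L ->]; elim: L P => [|x L IH] P UP.
  apply: (U_super _ _ (UP set0 (sub0set _))) => i Pi t.
  by rewrite set_nil subset0 => ->.
rewrite set_cons in UP *.
have UPL t : t `<=` [set` L] -> U (P t).
  by move=> tL; apply: UP; apply: subset_trans tL _; exact: subsetUr.
have UPx t : t `<=` [set` L] -> U (P (x |` t)).
  by move=> tL; apply: UP; exact: setUS.
apply: (U_super _ _ (U_setI _ _ (IH _ UPL) (IH _ UPx))).
by move=> i [Pi Pxi]; exact: forall_subset_setU1.
Qed.

Lemma nonstandard_gt f : nonstandard U f -> forall m, U [set i | (m < f i)%N].
Proof.
have [_ [_ [U_super [U_setI U_compl]]]] := U_ultra => f_nonstd.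
have Uneq n : U (~` [set i | f i = n]) by case: (U_compl [set i | f i = n]) => // /f_nonstd.
elim=> [|m IH]; first by apply: (U_super _ _ (Uneq 0)) => i /=; case: (f i).
apply: (U_super _ _ (U_setI _ _ IH (Uneq m.+1))) => i /= [mf fm].
by rewrite ltn_neqAle mf andbT; apply/eqP => /esym.
Qed.

End Ultrafilter.

Section IncreasingChoice.
Variable good : set nat -> Prop.
Hypothesis good0 : good set0.
Hypothesis good_sub : forall A B, A `<=` B -> good B -> good A.
Hypothesis good_extend : forall A m, finite_set A -> good A ->
  exists x, (m < x)%N /\ good (x |` A).

(* [chain n] lists the first [n] chosen points in decreasing order, so the
   head of [L] is the last point chosen. *)
Let next (L : seq nat) : nat :=
  xget 0 [set x | (head 0 L < x)%N /\ good (x |` [set` L])].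

Fixpoint chain (n : nat) : seq nat :=
  if n is k.+1 then next (chain k) :: chain k else [::].

Let point (n : nat) : nat := next (chain n).

Lemma nextP (L : seq nat) : good [set` L] ->
  (head 0 L < next L)%N /\ good (next L |` [set` L]).
Proof. move=> goodL; exact: (xgetPex 0 (good_extend (head 0 L) (finite_seq L) goodL)). Qed.

Lemma chain_good n : good [set` chain n].
Proof.
elim: n => [|n IH]; first by rewrite set_nil.
by rewrite /= set_cons; exact: (nextP IH).2.
Qed.

Lemma point_increasing n : (point n < point n.+1)%N.
Proof. exact: (nextP (chain_good n.+1)).1. Qed.

Lemma leq_point n : (n <= point n)%N.
Proof. by elim: n => // n IH; apply: leq_ltn_trans IH (point_increasing n). Qed.

Lemma chain_image n : [set` chain n] = point @` `I_n.
Proof.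
elim: n => [|n IH]; first by rewrite set_nil; apply/seteqP; split=> // x [].
rewrite /= set_cons IH; apply/seteqP; split=> x.
  case=> [->|[m mn <-]]; first by exists n => //=.
  by exists m => //=; rewrite ltnS ltnW.
case=> m /=; rewrite ltnS leq_eqVlt => /predU1P[-> <-|mn <-]; first by left.
by right; exists m.
Qed.

Lemma increasing_choice : exists A, infinite_set A /\
  forall k, good (A `&` [set j | (j <= k)%N]).
Proof.
exists (range point); split.
  apply: unbounded_infinite => m; exists (point m.+1); first by exists m.+1.
  exact: leq_point.
move=> k; apply: good_sub (chain_good k.+1); rewrite chain_image.
move=> _ [[m _ <-] /= amk]; exists m => //=.
by rewrite ltnS; apply: leq_trans (leq_point m) amk.
Qed.

End IncreasingChoice.

Lemma is_stem_unique T s s' : is_stem T s -> is_stem T s' -> s = s'.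
Proof.
move=> [Ts [Cs Ms]] [Ts' [Cs' Ms']].
by case: (Cs s' Ts') => ss'; [rewrite (Ms s' Ts' Cs' ss') | rewrite (Ms' s Ts Cs ss')].
Qed.

Lemma initseg_setU_gt (s0 s t : set nat) i :
  s0 = [set j | s j /\ (j <= i)%N] -> (forall j, t j -> (i < j)%N) ->
  initseg s0 (s `|` t).
Proof.
move=> -> ti; exists i; apply/seteqP; split=> j /=; first by case=> sj ji; split=> //; left.
by case=> [[sj|/ti]] // + ji; rewrite ltnNge ji.
Qed.

Lemma beta_tree_extend U f T s0 s i0 A m :
  is_ultrafilter U -> nonstandard U f ->
  (forall t, tree_above T s0 t -> star_T_contains_ext U f T t) ->
  s0 = [set j | s j /\ (j <= i0)%N] -> finite_set A ->
  (forall x, A x -> (i0 < x)%N) -> (forall t, t `<=` A -> T (s `|` t)) ->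
  exists x, (m < x)%N /\ forall t, t `<=` x |` A -> T (s `|` t).
Proof.
move=> U_ultra f_nonstd T_ext s0E finA Ai0 TA.
have U_ext : U [set i | forall t, t `<=` A -> T (s `|` t `|` [set f i])].
  apply: ultrafilter_subsets => // t tA; apply: T_ext; split; first exact: TA.
  by apply: initseg_setU_gt s0E _ => j /tA; exact: Ai0.
have [_ [_ [_ [U_setI _]]]] := U_ultra.
have [i [Ti mi]] := ultrafilter_nonempty U_ultra
  (U_setI _ _ U_ext (nonstandard_gt U_ultra f_nonstd m)).
exists (f i); split=> //; apply: forall_subset_setU1 => // t tA.
by rewrite (setUC [set f i]) setUA; exact: Ti.
Qed.

Lemma ellentuck_sub_body T s A : is_tree T ->
  (forall k t, t `<=` A `&` [set j | (j <= k)%N] -> T (s `|` t)) ->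
  ellentuck s (s `|` A) `<=` body T.
Proof.
move=> [_ [_ T_closed]] TA Y [Yinf [[i sE] YsA]]; split=> // u _ [k uE].
have [ki|ik] := leqP k i.
  have Ts : T s by rewrite -[s]setU0; apply: (TA 0); exact: sub0set.
  apply: T_closed Ts _; exists k; rewrite uE sE; apply/seteqP; split=> j /=.
    by case=> Yj jk; split=> //; split=> //; apply: leq_trans jk ki.
  by case=> -[].
pose t := [set j | Y j /\ (i < j)%N /\ (j <= k)%N].
have -> : u = s `|` t.
  rewrite uE sE; apply/seteqP; split=> j /=.
    by case=> Yj jk; have [ji|ij] := leqP j i; [left | right].
  by case=> [[Yj ji]|[Yj [_ jk]]]; split=> //; apply: leq_trans ji (ltnW ik).
apply: (TA k) => j [Yj [ij jk]]; split=> //; case: (YsA j Yj) => // sj.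
by move: ij; rewrite sE in sj; rewrite ltnNge sj.2.
Qed.

Lemma beta_tree_extension_set U f T s0 s i0 B :
  is_ultrafilter U -> nonstandard U f ->
  (forall t, tree_above T s0 t -> star_T_contains_ext U f T t) ->
  s0 = [set j | s j /\ (j <= i0)%N] -> T s -> (i0 <= B)%N ->
  exists A, [/\ infinite_set A, forall x, A x -> (B < x)%N &
    forall k t, t `<=` A `&` [set j | (j <= k)%N] -> T (s `|` t)].
Proof.
move=> U_ultra f_nonstd T_ext s0E Ts i0B.
pose good A := (forall x, A x -> (B < x)%N) /\ forall t, t `<=` A -> T (s `|` t).
have [A [A_inf A_good]] : exists A, infinite_set A /\
    forall k, good (A `&` [set j | (j <= k)%N]).
  apply: increasing_choice.
  - by split=> // t; rewrite subset0 => ->; rewrite setU0.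
  - move=> A A' AA' [A'B TA']; split=> [x /AA'|t tA]; first exact: A'B.
    exact/TA'/(subset_trans tA).
  - move=> A m A_fin [AB TA].
    have [|x [mBx Tx]] :=
      beta_tree_extend (maxn m B) U_ultra f_nonstd T_ext s0E A_fin _ TA.
      by move=> x /AB; exact: leq_ltn_trans.
    rewrite gtn_max in mBx; case/andP: mBx => mx Bx.
    by exists x; split=> //; split=> // y [->|/AB].
exists A; split=> // [x Ax|k]; last by case: (A_good k).
by case: (A_good x) => + _; apply; split=> /=.
Qed.

Theorem mainTheorem18 (U : set (set nat)) (f : nat -> nat)
  (HU : is_ultrafilter U) (HUnp : nonprincipal U) (Hbeta : nonstandard U f)
  (T : set (set nat)) (HT : beta_tree U f T) :
  forall s0, is_stem T s0 ->
  forall s, tree_above T s0 s ->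
  exists X : set nat, infinite_set X /\ initseg s X /\ ellentuck s X `<=` body T.
Proof.
move=> s0 s0_stem s [Ts [i0 s0E]].
have [T_tree [s1 [s1_stem [_ T_ext]]]] := HT.
rewrite -(is_stem_unique s0_stem s1_stem) in T_ext.
have [Bs sBs] := finite_nat_bounded (T_tree.2.1 s Ts).
have [A [A_inf AB TA]] := beta_tree_extension_set HU Hbeta T_ext s0E Ts (leq_maxr Bs i0).
exists (s `|` A); split; [|split].
- by apply: contra_not A_inf; apply: sub_finite_set; exact: subsetUr.
- apply: (initseg_setU_gt (i := maxn Bs i0)) AB; apply/seteqP; split=> [j sj|j []//].
  by split=> //; apply: leq_trans (sBs j sj) (leq_maxl _ _).
- exact: ellentuck_sub_body T_tree TA.
Qed.
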